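(* Let $R$ be a reduced root system in a finite-dimensional real vector space $V$, let $W=W(R)$ be its Weyl group, let $\geq$ be a total ordering of $V$ and let $\{\alpha_1,\ldots,\alpha_r\}$ be the corresponding base of $R$. Let $T=\{t_1,\ldots,t_m\}\subset W$ be a set of reflections, $t_i=s_{\beta_i}$ with $\beta_i\in R^+$. Let $W'$ be the subgroup of $W$ generated by $T$, let $R'=W'\cdot\{\beta_1,\ldots,\beta_m\}$ and let $V'$ be the linear span of $R'$. Then $R'$ is a root system in $V'$ and $W'$ (acting on $V'$ by restriction) is its Weyl group. Furthermore, if $\{\alpha'_1,\ldots,\alpha'_\ell\}$ is the base of $R'$ associated with the total ordering induced by $\geq$ on $V'$, then the set $\{s_{\alpha'_1},\ldots,s_{\alpha'_\ell}\}$ may be obtained from $T$ by a finite sequence of Nielsen transformations.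
   Context: A total ordering of $V$ means a total order compatible with the vector space structure ($x\geq y \iff x-y\geq 0$; $x>0,y>0\Rightarrow x+y>0$; $x>0$, $c>0$ real $\Rightarrow cx>0$). $R^+=\{\alpha\in R:\alpha>0\}$, and the base associated with the ordering is the set of positive roots that are not sums of two positive roots. $s_\alpha$ denotes the reflection in the root $\alpha$. A Nielsen transformation of a finite subset $\{t_1,\ldots,t_m\}$ of a group consists in choosing $i\neq j$ and replacing $t_j$ by $t_it_jt_i^{-1}$ (leaving the other elements unchanged), giving a new subset. *)

(* V = 'cV[R]_n (column vectors) with R : realType;
   linear maps are n x n matrices acting on the left (M *m v), so matrix
   product is composition of maps; linear forms are row vectors. *)
From HB Require Import structures.
From mathcomp Require Import all_boot all_order all_algebra.
From mathcomp Require Import reals.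
From Stdlib Require Import Relations.
Set Implicit Arguments. Unset Strict Implicit. Unset Printing Implicit Defensive.
Import Order.TTheory GRing.Theory Num.Theory.
Local Open Scope ring_scope.

Section RootDefs.
Variables (R : realType) (n : nat).
Local Notation vec := 'cV[R]_n.
Local Notation mx := 'M[R]_n.

Definition pair (c : 'rV[R]_n) (v : vec) : R := (c *m v) 0 0.

Definition refl (a : vec) (c : 'rV[R]_n) : mx := 1%:M - a *m c.

Definition lspan (S : vec -> Prop) : vec -> Prop :=
  fun v => exists (s : seq vec) (f : vec -> R),
    (forall x, x \in s -> S x) /\ v = \sum_(x <- s) f x *: x.

Definition coroot_for (S : vec -> Prop) (a : vec) (c : 'rV[R]_n) : Prop :=
  pair c a = 2 /\
  forall b, S b -> S (refl a c *m b) /\ exists z : int, pair c b = z%:~R.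

Definition root_system_in (U S : vec -> Prop) : Prop :=
  [/\ exists s : seq vec, forall v, S v <-> v \in s,
      forall v, S v -> U v,
      forall v, U v -> lspan S v,
      ~ S 0
    & forall a, S a -> exists c, coroot_for S a c].

Definition reduced (S : vec -> Prop) : Prop :=
  forall (a : vec) (x : R), S a -> S (x *: a) -> x = 1 \/ x = -1.

(* t is (an extension to V of) the reflection s_a of the root system S *)
Definition refl_in (S : vec -> Prop) (a : vec) (t : mx) : Prop :=
  exists c, coroot_for S a c /\ t = refl a c.

Inductive gen (G : mx -> Prop) : mx -> Prop :=
| gen_one : gen G 1%:M
| gen_base g : G g -> gen G g
| gen_mul g h : gen G g -> gen G h -> gen G (g *m h)
| gen_inv g : gen G g -> gen G (invmx g).

(* Weyl group of S (as matrices on V; for S spanning a proper subspace U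
   these are extensions of the reflections of U) *)
Definition weyl (S : vec -> Prop) : mx -> Prop :=
  gen (fun t => exists a, S a /\ refl_in S a t).

Definition total_ordering (le : vec -> vec -> Prop) : Prop :=
  (forall x, le x x) /\
  (forall x y, le x y -> le y x -> x = y) /\
  (forall x y z, le x y -> le y z -> le x z) /\
  (forall x y, le x y \/ le y x) /\
  (forall x y, le y x <-> le 0 (x - y)) /\
  (forall x y, (le 0 x /\ x <> 0) -> (le 0 y /\ y <> 0) ->
                  le 0 (x + y) /\ x + y <> 0) /\
  (forall x (k : R), (le 0 x /\ x <> 0) -> 0 < k ->
                  le 0 (k *: x) /\ k *: x <> 0).

Definition positive (le : vec -> vec -> Prop) (x : vec) : Prop :=
  le 0 x /\ x <> 0.

Definition base (le : vec -> vec -> Prop) (S : vec -> Prop) : vec -> Prop :=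
  fun a => S a /\ positive le a /\
    ~ (exists b c, S b /\ positive le b /\ S c /\ positive le c /\ a = b + c).

(* Nielsen transformations on finite subsets of GL(V) (finite subsets are
   represented by sequences, considered up to membership). *)
Definition nielsen_step (A B : seq mx) : Prop :=
  exists ti tj, [/\ ti \in A, tj \in A, ti != tj &
    forall x, x \in B <-> ((x \in A /\ x != tj) \/ x = ti *m tj *m invmx ti)].

Definition nielsen_reach : seq mx -> seq mx -> Prop :=
  clos_refl_trans (seq mx) nielsen_step.

End RootDefs.

(* The reflections t_i generate a group W' of root-preserving maps, so R' = W'.{beta_i}
   is a finite set of roots stable under W'; since s_(w b) = w s_b w^-1, every
   reflection in a root of R' lies in W', which makes R' a root system in its
   span with Weyl group W'.
   For the base, start from g = {beta_i}, whose reflections generate W' and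
   satisfy R' = W'.g.  As long as two elements x, y of g make an acute angle,
   one of +-s_x y, +-s_y x is a positive root strictly below y (resp. x) for
   the ordering; exchanging it for y (resp. x) is a Nielsen move on the
   reflections and lowers the weight sum_(y in g) 2^#{positive roots below y}.
   The process stops at an obtuse set g of positive roots.  A rank-two
   (dihedral) computation and induction on the length of words show that every
   root of R' is a nonnegative or nonpositive combination of g, and an obtuse
   set of positive vectors is linearly independent, so g is the base of R'. *)

From HB Require Import structures.
From mathcomp Require Import all_boot all_order all_algebra.
From mathcomp Require Import reals boolp.
From mathcomp Require Import ring lra zify.
From Stdlib Require Import Relations.
Set Implicit Arguments. Unset Strict Implicit. Unset Printing Implicit Defensive.
Import Order.TTheory GRing.Theory Num.Theory.
Local Open Scope ring_scope.

Ltac vring := apply/matrixP => i j; rewrite !mxE; ring.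
Ltac vfield := apply/matrixP => i j; rewrite !mxE; field.

(** * Total orderings of V *)

Section TotalOrdering.
Variables (R : realType) (n : nat).
Local Notation vec := 'cV[R]_n.
Variable le : vec -> vec -> Prop.
Hypothesis leT : total_ordering le.
Local Notation pos := (positive le).

Lemma ordering_refl x : le x x.
Proof. by case: leT. Qed.

Lemma ordering_anti x y : le x y -> le y x -> x = y.
Proof. by case: leT => _ [H _]; exact: H. Qed.

Lemma ordering_total x y : le x y \/ le y x.
Proof. by case: leT => _ [_ [_ [H _]]]; exact: H. Qed.

Lemma ordering_subP x y : le y x <-> le 0 (x - y).
Proof. by case: leT => _ [_ [_ [_ [H _]]]]; exact: H. Qed.

Lemma positiveD x y : pos x -> pos y -> pos (x + y).
Proof. by case: leT => _ [_ [_ [_ [_ [H _]]]]]; exact: H. Qed.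

Lemma positiveZ x k : pos x -> 0 < k -> pos (k *: x).
Proof. by case: leT => _ [_ [_ [_ [_ [_ H]]]]]; exact: H. Qed.

Lemma not_positive0 : ~ pos 0.
Proof. by case. Qed.

Lemma positive_nonnegD x y : pos x -> le 0 y -> pos (x + y).
Proof.
move=> px hy; have [->|yn] := eqVneq y 0; first by rewrite addr0.
by apply: positiveD => //; split => //; apply/eqP.
Qed.

Lemma nonnegD x y : le 0 x -> le 0 y -> le 0 (x + y).
Proof.
move=> hx hy; have [->|xn] := eqVneq x 0; first by rewrite add0r.
by case: (@positive_nonnegD x y) => //; split => //; apply/eqP.
Qed.

Lemma nonnegZ x k : le 0 x -> 0 <= k -> le 0 (k *: x).
Proof.
move=> hx; rewrite le0r => /orP[/eqP ->|kp]; first by rewrite scale0r; exact: ordering_refl.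
have [->|xn] := eqVneq x 0; first by rewrite scaler0; exact: ordering_refl.
by case: (@positiveZ x k) => //; split => //; apply/eqP.
Qed.

Lemma positiveN x : pos x -> ~ pos (- x).
Proof.
move=> [hx xn] [hnx _]; apply: xn; apply: ordering_anti => //.
by apply/ordering_subP; rewrite sub0r.
Qed.

Lemma positive_trichotomy x : pos x \/ x = 0 \/ pos (- x).
Proof.
have [->|xn] := eqVneq x 0; first by right; left.
have [h|h] := ordering_total 0 x; first by left; split => //; apply/eqP.
right; right; split; first by move/ordering_subP: h; rewrite sub0r.
by move/eqP; rewrite oppr_eq0; apply/negP.
Qed.

Lemma positive_neqN x y : pos x -> pos y -> y != - x.
Proof. by move=> px py; apply/eqP => yE; move: py; rewrite yE; exact: positiveN. Qed.

Lemma positive_sign x : x != 0 -> pos x \/ pos (- x).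
Proof. by case: (positive_trichotomy x) => [|[/eqP->|]]; [left | | right]. Qed.

Definition vlt x y := pos (y - x).

Lemma vlt_trans x y z : vlt x y -> vlt y z -> vlt x z.
Proof. by rewrite /vlt => h1 h2; have := positiveD h1 h2; rewrite addrC addrA subrK. Qed.

Lemma vlt_irr x : ~ vlt x x.
Proof. by rewrite /vlt subrr; exact: not_positive0. Qed.

Lemma vlt_total x y : x != y -> vlt x y \/ vlt y x.
Proof.
move=> xy; case: (positive_trichotomy (y - x)) => [|[/eqP|]]; first by left.
  by rewrite subr_eq0 eq_sym (negbTE xy).
by rewrite opprB; right.
Qed.

Lemma vlt_sub_scale x y k : pos x -> pos y -> vlt x y -> 0 < k <= 2 -> y - k *: x != 0 ->
  exists z, [/\ pos z, z = y - k *: x \/ z = - (y - k *: x) & vlt z y].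
Proof.
move=> px [y0 _] xy /andP[k0 k2] /positive_sign[h|h].
  exists (y - k *: x); split; [done | by left |].
  by rewrite /vlt opprB addrC subrK; exact: positiveZ.
exists (- (y - k *: x)); split; [done | by right |].
rewrite /vlt (_ : y - - (y - k *: x) = k *: (y - x) + (2 - k) *: y); last by vring.
by apply: positive_nonnegD; [exact: positiveZ | apply: nonnegZ; rewrite // subr_ge0].
Qed.

(* The G2 case of the reduction step: <x^, y> = 3 and <y^, x> = 1. *)
Lemma vlt_sub_scale3 x y : pos x -> vlt x y -> (2 : R) *: y != 3 *: x -> y - 3 *: x != 0 ->
  (exists z, [/\ pos z, z = y - 3 *: x \/ z = - (y - 3 *: x) & vlt z y]) \/
  vlt (y - x) x.
Proof.
move=> px xy; rewrite -subr_eq0 => /positive_sign[h|h] nz; last first.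
  right; rewrite /vlt (_ : x - (y - x) = 2^-1 *: - (2 *: y - 3 *: x) + 2^-1 *: x); last by vfield.
  by apply: positiveD; apply: positiveZ; rewrite // invr_gt0.
left; have [h'|h'] := positive_sign nz.
  exists (y - 3 *: x); split; [done | by left |].
  by rewrite /vlt opprB addrC subrK; exact: positiveZ.
exists (- (y - 3 *: x)); split; [done | by right |].
by rewrite /vlt (_ : y - - (y - 3 *: x) = 2 *: y - 3 *: x) //; vring.
Qed.

Lemma nonneg_sum (s : seq vec) (f : vec -> R) :
  (forall x, x \in s -> le 0 x) -> (forall x, x \in s -> 0 <= f x) ->
  le 0 (\sum_(x <- s) f x *: x).
Proof.
elim: s => [|y s IH] Hs Hf; first by rewrite big_nil; exact: ordering_refl.
rewrite big_cons; apply: nonnegD.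
  by apply: nonnegZ; [apply: Hs | apply: Hf]; rewrite mem_head.
by apply: IH => x xs; [apply: Hs | apply: Hf]; rewrite in_cons xs orbT.
Qed.

Lemma positive_sum (s : seq vec) (f : vec -> R) y :
  (forall x, x \in s -> pos x) -> (forall x, x \in s -> 0 <= f x) ->
  y \in s -> 0 < f y -> pos (\sum_(x <- s) f x *: x).
Proof.
move=> Hs Hf ys fy; rewrite (perm_big _ (perm_to_rem ys)) big_cons.
apply: positive_nonnegD; first exact: positiveZ (Hs _ ys) fy.
by apply: nonneg_sum => x /mem_rem xs; [case: (Hs x xs) | exact: Hf].
Qed.

End TotalOrdering.

(** * Reflections *)

Section Reflections.
Variables (R : realType) (n : nat).
Local Notation vec := 'cV[R]_n.
Local Notation mx := 'M[R]_n.
Implicit Types (a x y : vec) (c : 'rV[R]_n) (A B : mx).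

Lemma pairE c x : c *m x = (pair c x)%:M.
Proof. exact: mx11_scalar. Qed.

Lemma pairD c x y : pair c (x + y) = pair c x + pair c y.
Proof. by rewrite /pair mulmxDr mxE. Qed.

Lemma pairZ c x k : pair c (k *: x) = k * pair c x.
Proof. by rewrite /pair -scalemxAr mxE. Qed.

Lemma pairN c x : pair c (- x) = - pair c x.
Proof. by rewrite /pair mulmxN mxE. Qed.

Lemma pairB c x y : pair c (x - y) = pair c x - pair c y.
Proof. by rewrite pairD pairN. Qed.

Lemma pair_sum c (s : seq vec) (f : vec -> R) :
  pair c (\sum_(y <- s) f y *: y) = \sum_(y <- s) f y * pair c y.
Proof.
rewrite /pair mulmx_sumr summxE; apply: eq_bigr => y _.
by rewrite -scalemxAr mxE.
Qed.

Lemma reflE a c x : refl a c *m x = x - pair c x *: a.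
Proof. by rewrite /refl mulmxBl mul1mx -mulmxA pairE mul_mx_scalar. Qed.

Lemma refl_invol a c : pair c a = 2 -> refl a c *m refl a c = 1%:M.
Proof.
move=> ca; rewrite /refl mulmxBl mul1mx mulmxBr mulmx1 -!mulmxA (mulmxA c).
rewrite pairE ca mul_scalar_mx -scalemxAr scaler_nat mulr2n.
by rewrite opprB -addrA addrK addNr addr0.
Qed.

Lemma refl_unitmx a c : pair c a = 2 -> refl a c \in unitmx.
Proof. by move/refl_invol/mulmx1_unit => []. Qed.

Lemma mulmx1_invmx A B : A *m B = 1%:M -> invmx A = B.
Proof.
move=> AB; have [UA _] := mulmx1_unit AB.
by rewrite -[LHS]mulmx1 -AB mulmxA mulVmx // mul1mx.
Qed.

Lemma invmxM A B : A \in unitmx -> B \in unitmx -> invmx (A *m B) = invmx B *m invmx A.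
Proof.
move=> UA UB; apply: mulmx1_invmx.
by rewrite mulmxA -(mulmxA A) mulmxV // mulmx1 mulmxV.
Qed.

Lemma invmx_refl a c : pair c a = 2 -> invmx (refl a c) = refl a c.
Proof. by move/refl_invol/mulmx1_invmx. Qed.

Lemma mulmx_colP A B : (forall x : vec, A *m x = B *m x) -> A = B.
Proof.
move=> H; apply/matrixP => i j.
by have /matrixP/(_ i 0) := H (delta_mx j 0); rewrite -!colE !mxE.
Qed.

Lemma pairP c c' : (forall x, pair c x = pair c' x) -> c = c'.
Proof.
move=> H; apply/matrixP => i j.
by have := H (delta_mx j 0); rewrite /pair -!colE !mxE !ord1.
Qed.

Lemma gen_sub (G1 G2 : mx -> Prop) w :
  (forall t, G1 t -> G2 t) -> gen G1 w -> gen G2 w.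
Proof.
move=> H; elim=> [|g /H|g h _ IH1 _ IH2|g _ IH]; by [constructor | apply: gen_mul | apply: gen_inv].
Qed.

Lemma gen_unitmx (G0 : mx -> Prop) w :
  (forall t, G0 t -> t \in unitmx) -> gen G0 w -> w \in unitmx.
Proof.
move=> H; elim=> [|g /H //|g h _ IH1 _ IH2|g _ IH]; first exact: unitmx1.
  by rewrite unitmx_mul IH1.
by rewrite unitmx_inv.
Qed.

Lemma nielsen_step_eq_mem (A A' B : seq mx) :
  A =i A' -> nielsen_step A' B -> nielsen_step A B.
Proof.
move=> E [ti [tj [i1 i2 i3 H]]]; exists ti, tj; split; rewrite ?E //.
by move=> x; rewrite E; apply: H.
Qed.

End Reflections.

Lemma count_ltn_sub (T : eqType) (P Q : pred T) (s : seq T) :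
  (forall d, P d -> Q d) -> (exists d, [/\ d \in s, Q d & ~~ P d]) ->
  (count P s < count Q s)%N.
Proof.
move=> PQ; elim: s => [|d s IH] [e [es Qe Pe]] //=.
move: es; rewrite in_cons => /orP[/eqP de|es].
  by rewrite -de (negbTE Pe) Qe add0n add1n ltnS sub_count.
apply: (@leq_trans (P d + count Q s)%N); first by rewrite ltn_add2l IH //; exists e.
by rewrite leq_add2r; case: (P d) (PQ d) => //= ->.
Qed.
Section AlternatingWords.
Variable T : eqType.
Implicit Types (x y : T) (s : seq T).

Fixpoint alternating x y j : seq T := if j is j'.+1 then rcons (alternating y x j') x else [::].

Lemma size_alternating x y j : size (alternating x y j) = j.
Proof. by elim: j x y => [|j IH] x y //=; rewrite size_rcons IH. Qed.

Lemma mem_alternating x y j t : t \in alternating x y j -> (t == x) || (t == y).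
Proof.
elim: j x y => [|j IH] x y //=; rewrite mem_rcons in_cons => /orP[->//|/IH].
by rewrite orbC.
Qed.

Lemma all_alternating (P : pred T) x y j : P x -> P y -> all P (alternating x y j).
Proof. by move=> Px Py; apply/allP => t /mem_alternating /orP[] /eqP->. Qed.

Lemma alternating_add x y i j :
  alternating x y (i + j) = alternating (if odd j then y else x) (if odd j then x else y) i ++ alternating x y j.
Proof. by elim: j x y => [|j IH] x y; rewrite ?addn0 ?cats0 // addnS /= IH -rcons_cat; case: odd. Qed.

Lemma alternatingP x y s : x != y -> all [in [:: x; y]] s ->
  (forall p q t, s <> p ++ t :: t :: q) -> (forall s', s <> rcons s' y) ->
  s = alternating x y (size s).
Proof.
elim/last_ind: s x y => [//|s e IH] x y xy /allP Hl Hnad Hlast.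
have ex : e = x.
  have := Hl e; rewrite mem_rcons mem_head !inE => /(_ isT) /orP[/eqP //|/eqP ey].
  by case: (Hlast s); rewrite ey.
rewrite ex size_rcons /=; congr rcons; apply: IH.
- by rewrite eq_sym.
- apply/allP => t ts; have := Hl t; rewrite mem_rcons in_cons ts orbT !inE orbC.
  exact.
- by move=> p q t E; apply: (Hnad p (rcons q e) t); rewrite E rcons_cat.
- by move=> s' E; apply: (Hnad s' [::] x); rewrite E ex -!cats1 -catA.
Qed.

End AlternatingWords.

Lemma map_alternating (T T' : eqType) (f : T -> T') (x y : T) j :
  map f (alternating x y j) = alternating (f x) (f y) j.
Proof. by elim: j x y => [|j IH] x y //=; rewrite map_rcons IH. Qed.

(** * The invariant inner product and coroots *)

Section RootSystem.
Variables (R : realType) (n : nat).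
Local Notation vec := 'cV[R]_n.
Local Notation mx := 'M[R]_n.
Variable RS : vec -> Prop.
Hypothesis RSsys : root_system_in (fun _ => True) RS.
Hypothesis RSred : reduced RS.
Implicit Types (a b x y : vec) (w : mx).

Let roots_finite : exists s : seq vec, forall v, RS v <-> v \in s.
Proof. by case: RSsys. Qed.

Definition roots : seq vec := undup (sval (cid roots_finite)).

Lemma rootsP v : RS v <-> v \in roots.
Proof. by rewrite mem_undup; exact: (svalP (cid roots_finite)). Qed.

Lemma roots_uniq : uniq roots.
Proof. exact: undup_uniq. Qed.

Lemma root_neq0 a : RS a -> a != 0.
Proof. by case: RSsys => _ _ _ RS0 _ Ha; apply/eqP => a0; apply: RS0; rewrite -a0. Qed.

(* The quadratic form sum_b (b . x)^2 is definite because the roots span V;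
   its Gram matrix is invariant under root-preserving maps, and so is the
   inner product defined by the inverse Gram matrix. *)
Definition gram : mx := \sum_(b <- roots) b *m b^T.

Lemma gram_tr : gram^T = gram.
Proof. by rewrite /gram linear_sum /=; apply: eq_bigr => b _; rewrite trmx_mul trmxK. Qed.

Lemma gram_quadE y :
  (y^T *m gram *m y) 0 0 = \sum_(b <- roots) ((b^T *m y) 0 0) ^+ 2.
Proof.
rewrite /gram mulmx_sumr mulmx_suml summxE; apply: eq_bigr => b _.
rewrite mulmxA -mulmxA -[y^T *m b]trmxK trmx_mul trmxK.
by rewrite mxE big_ord1 mxE expr2.
Qed.

Lemma orthogonal_roots_eq0 y : (forall b, RS b -> (b^T *m y) 0 0 = 0) -> y = 0.
Proof.
move=> H; have Hx x : (x^T *m y) 0 0 = 0.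
  case: RSsys => _ _ span _ _; have [s [f [Hs ->]]] := span x I.
  rewrite linear_sum mulmx_suml summxE big1_seq // => b /andP[_ bs].
  by rewrite linearZ /= -scalemxAl mxE H ?mulr0 //; exact: Hs.
have : (y^T *m y) 0 0 = \sum_i y i 0 ^+ 2.
  by rewrite !mxE; apply: eq_bigr => i _; rewrite !mxE expr2.
rewrite Hx => /esym/eqP; rewrite psumr_eq0 => [/allP y0|i _]; last exact: sqr_ge0.
apply/matrixP => i j; rewrite ord1 mxE.
by have := y0 i (mem_index_enum _); rewrite sqrf_eq0 => /eqP.
Qed.

Lemma gram_quad_ge0 y : 0 <= (y^T *m gram *m y) 0 0.
Proof. by rewrite gram_quadE sumr_ge0 // => b _; exact: sqr_ge0. Qed.

Lemma gram_quad_eq0 y : (y^T *m gram *m y) 0 0 = 0 -> y = 0.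
Proof.
rewrite gram_quadE => /eqP; rewrite psumr_eq0 => [/allP y0|b _]; last exact: sqr_ge0.
apply: orthogonal_roots_eq0 => b /rootsP /y0.
by rewrite sqrf_eq0 => /eqP.
Qed.

Lemma gram_unitmx : gram \in unitmx.
Proof.
rewrite -row_free_unit; apply: inj_row_free => v vG.
have : (v^T^T *m gram *m v^T) 0 0 = 0 by rewrite trmxK vG mul0mx mxE.
by move/gram_quad_eq0/(congr1 trmx); rewrite trmxK trmx0.
Qed.

Lemma gram_invariant (t : mx) : t \in unitmx -> (forall b, RS b -> RS (t *m b)) ->
  t *m gram *m t^T = gram.
Proof.
move=> Ut tRS.
have -> : t *m gram *m t^T = \sum_(b <- map (mulmx t) roots) b *m b^T.
  rewrite big_map /gram mulmx_sumr mulmx_suml; apply: eq_bigr => b _.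
  by rewrite trmx_mul !mulmxA.
have uniq_t : uniq (map (mulmx t) roots).
  rewrite map_inj_uniq ?roots_uniq // => x y /(congr1 (mulmx (invmx t))).
  by rewrite !mulKmx.
have sub_t : {subset map (mulmx t) roots <= roots}.
  by move=> _ /mapP[b /rootsP Hb ->]; apply/rootsP/tRS.
have [|_ eq_t] := uniq_min_size uniq_t sub_t; first by rewrite size_map.
by rewrite /gram; apply/perm_big/uniq_perm; rewrite ?roots_uniq.
Qed.

Definition ip x y : R := (x^T *m invmx gram *m y) 0 0.

Lemma ipC x y : ip x y = ip y x.
Proof.
have tr11 (A : 'M[R]_1) : A^T 0 0 = A 0 0 by rewrite mxE.
by rewrite /ip -tr11 !trmx_mul trmxK trmx_inv gram_tr mulmxA.
Qed.

Lemma ipDl x y z : ip (x + y) z = ip x z + ip y z.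
Proof. by rewrite /ip linearD /= !mulmxDl mxE. Qed.

Lemma ipZl k x y : ip (k *: x) y = k * ip x y.
Proof. by rewrite /ip linearZ /= -!scalemxAl mxE. Qed.

Lemma ipNl x y : ip (- x) y = - ip x y.
Proof. by rewrite /ip linearN /= !mulNmx mxE. Qed.

Lemma ipBl x y z : ip (x - y) z = ip x z - ip y z.
Proof. by rewrite ipDl ipNl. Qed.

Lemma ipDr x y z : ip z (x + y) = ip z x + ip z y.
Proof. by rewrite ipC ipDl !(ipC z). Qed.

Lemma ipZr k x y : ip x (k *: y) = k * ip x y.
Proof. by rewrite ipC ipZl ipC. Qed.

Lemma ipNr x y : ip x (- y) = - ip x y.
Proof. by rewrite ipC ipNl ipC. Qed.

Lemma ipBr x y z : ip z (x - y) = ip z x - ip z y.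
Proof. by rewrite ipDr ipNr. Qed.

Lemma ip_sumr (s : seq vec) (P : pred vec) (F : vec -> vec) y :
  ip y (\sum_(t <- s | P t) F t) = \sum_(t <- s | P t) ip y (F t).
Proof. by rewrite /ip mulmx_sumr summxE. Qed.

Lemma ip_suml (s : seq vec) (P : pred vec) (F : vec -> vec) y :
  ip (\sum_(t <- s | P t) F t) y = \sum_(t <- s | P t) ip (F t) y.
Proof. by rewrite ipC ip_sumr; apply: eq_bigr => t _; rewrite ipC. Qed.

Lemma ip_gt0 x : x != 0 -> 0 < ip x x.
Proof.
move=> xn0; set y := invmx gram *m x.
have xE : x = gram *m y by rewrite mulKVmx ?gram_unitmx.
have -> : ip x x = (y^T *m gram *m y) 0 0.
  by rewrite /ip {1}xE trmx_mul gram_tr -!mulmxA (mulmxA gram) mulmxV ?gram_unitmx // mul1mx.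
rewrite lt_def gram_quad_ge0 andbT; apply/eqP => /gram_quad_eq0 y0.
by move: xn0; rewrite xE y0 mulmx0 eqxx.
Qed.

Lemma ip_invariant (t : mx) : t \in unitmx -> (forall b, RS b -> RS (t *m b)) ->
  forall x y, ip (t *m x) (t *m y) = ip x y.
Proof.
move=> Ut tRS x y; have UtT : t^T \in unitmx by rewrite unitmx_tr.
have E : t^T *m invmx gram *m t = invmx gram.
  rewrite -{1}(gram_invariant Ut tRS) !invmxM ?unitmx_mul ?Ut ?gram_unitmx //.
  by rewrite !mulmxA mulmxV // mul1mx -mulmxA mulVmx // mulmx1.
by rewrite /ip trmx_mul -[in RHS]E !mulmxA.
Qed.

Lemma coroot_pairE a c : RS a -> coroot_for RS a c ->
  forall x, pair c x = 2 * ip a x / ip a a.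
Proof.
move=> Ha [ca Hc] x; have aa := ip_gt0 (root_neq0 Ha).
have := ip_invariant (refl_unitmx ca) (fun b Hb => (Hc b Hb).1) x a.
rewrite !reflE ca scaler_nat mulr2n opprD addNKr ipNr ipBl ipZl ipC => E.
by apply: (@mulIf _ (ip a a)); rewrite ?gt_eqF // mulfVK ?gt_eqF //; lra.
Qed.

Definition coroot a : 'rV[R]_n := (2 / ip a a) *: (a^T *m invmx gram).

Lemma pair_corootE a x : pair (coroot a) x = 2 * ip a x / ip a a.
Proof. by rewrite /pair /coroot -scalemxAl mxE mulrAC. Qed.

Lemma coroot_uniq a c : RS a -> coroot_for RS a c -> c = coroot a.
Proof. by move=> Ha Hc; apply: pairP => x; rewrite (coroot_pairE Ha Hc) pair_corootE. Qed.

Lemma coroot_forP a : RS a -> coroot_for RS a (coroot a).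
Proof.
move=> Ha; case: RSsys => _ _ _ _ /(_ a Ha) [c Hc].
by rewrite -(coroot_uniq Ha Hc).
Qed.

Definition srefl a : mx := refl a (coroot a).

Lemma refl_inE a (t : mx) : RS a -> refl_in RS a t <-> t = srefl a.
Proof.
move=> Ha; split => [[c [Hc ->]]|->]; first by rewrite /srefl -(coroot_uniq Ha Hc).
by exists (coroot a); split => //; exact: coroot_forP.
Qed.

Lemma pair_coroot_self a : RS a -> pair (coroot a) a = 2.
Proof. by move/coroot_forP => []. Qed.

Lemma srefl_root a b : RS a -> RS b -> RS (srefl a *m b).
Proof. by move=> /coroot_forP[_ H] /H[]. Qed.

Lemma coroot_int a b : RS a -> RS b -> exists z : int, pair (coroot a) b = z%:~R.
Proof. by move=> /coroot_forP[_ H] /H[]. Qed.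

Lemma sreflE a x : srefl a *m x = x - pair (coroot a) x *: a.
Proof. exact: reflE. Qed.

Lemma srefl_invol a : RS a -> srefl a *m srefl a = 1%:M.
Proof. by move/pair_coroot_self/refl_invol. Qed.

Lemma srefl_unitmx a : RS a -> srefl a \in unitmx.
Proof. by move/pair_coroot_self/refl_unitmx. Qed.

Lemma invmx_srefl a : RS a -> invmx (srefl a) = srefl a.
Proof. by move/pair_coroot_self/invmx_refl. Qed.

Lemma srefl_self a : RS a -> srefl a *m a = - a.
Proof.
move=> Ha; rewrite sreflE pair_coroot_self // scaler_nat mulr2n.
by rewrite opprD addNKr.
Qed.

Lemma sreflN a : srefl (- a) = srefl a.
Proof.
have corootN : coroot (- a) = - coroot a.
  by rewrite /coroot ipNl ipNr opprK linearN /= mulNmx scalerN.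
by rewrite /srefl /refl corootN mulNmx mulmxN opprK.
Qed.

Lemma pair_coroot_gt0 a b : RS a -> (0 < pair (coroot a) b) = (0 < ip a b).
Proof.
move=> Ha; have aa := ip_gt0 (root_neq0 Ha).
by rewrite pair_corootE -mulrA pmulr_rgt0 // pmulr_lgt0 // invr_gt0.
Qed.

Lemma pair_coroot_lt0 a b : RS a -> (pair (coroot a) b < 0) = (ip a b < 0).
Proof.
move=> Ha; have aa := ip_gt0 (root_neq0 Ha).
by rewrite pair_corootE -mulrA pmulr_rlt0 // pmulr_llt0 // invr_gt0.
Qed.

Lemma ip_sqr_lt x y : y != 0 -> (forall k : R, x != k *: y) ->
  ip x y ^+ 2 < ip x x * ip y y.
Proof.
move=> yn H; have yy := ip_gt0 yn.
set k := ip x y / ip y y.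
have := ip_gt0 (_ : x - k *: y != 0); rewrite subr_eq0 => /(_ (H k)).
rewrite ipBl !ipBr !ipZl !ipZr (ipC y x) /k => h.
rewrite -subr_gt0; have := mulr_gt0 yy h; congr (0 < _).
by field; rewrite gt_eqF.
Qed.

Lemma root_not_multiple a b : RS a -> RS b -> b != a -> b != - a ->
  forall k : R, b != k *: a.
Proof.
move=> Ha Hb ba bna k; apply/eqP => bE.
have [k1|k1] := RSred Ha (eq_ind _ RS Hb _ bE).
  by move: ba; rewrite bE k1 scale1r eqxx.
by move: bna; rewrite bE k1 scaleN1r eqxx.
Qed.

Lemma cartan_prod_lt4 a b : RS a -> RS b -> b != a -> b != - a ->
  pair (coroot a) b * pair (coroot b) a < 4.
Proof.
move=> Ha Hb ba bna; have aa := ip_gt0 (root_neq0 Ha); have bb := ip_gt0 (root_neq0 Hb).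
have := ip_sqr_lt (root_neq0 Ha) (root_not_multiple Ha Hb ba bna).
rewrite !pair_corootE (ipC b a) -(ltr_pM2l (_ : 0 < 4 / (ip a a * ip b b))); last first.
  by rewrite divr_gt0 ?mulr_gt0.
by congr (_ < _); field; rewrite !gt_eqF.
Qed.

Lemma cartan_int a b : RS a -> RS b -> b != a -> b != - a ->
  exists k l : int, [/\ pair (coroot a) b = k%:~R, pair (coroot b) a = l%:~R,
    (k * l < 4)%R, (0 < k) = (0 < l) & (k < 0) = (l < 0)].
Proof.
move=> Ha Hb ba bna.
have [k Ek] := coroot_int Ha Hb; have [l El] := coroot_int Hb Ha.
exists k, l; split => //.
- by rewrite -(ltr_int R) intrM -Ek -El; exact: cartan_prod_lt4.
- by rewrite -(ltr0z R) -(ltr0z R l) -Ek -El !pair_coroot_gt0 // ipC.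
- by rewrite -(ltrz0 R) -(ltrz0 R l) -Ek -El !pair_coroot_lt0 // ipC.
Qed.

Lemma srefl_inj a b : RS a -> RS b -> b != - a -> srefl a = srefl b -> a = b.
Proof.
move=> Ha Hb bna E.
have : srefl b *m a = - a by rewrite -E srefl_self.
rewrite sreflE => /matrixP E2.
have aE : a = (pair (coroot b) a / 2) *: b.
  apply/matrixP => i j; have := E2 i j; rewrite !mxE mulrAC.
  by set kb := _ * b i j; lra.
have [k1|k1] := RSred Hb (eq_ind _ RS Ha _ aE); first by rewrite aE k1 scale1r.
by move: bna; rewrite aE k1 scaleN1r opprK eqxx.
Qed.

Definition root_preserving w := [/\ w \in unitmx,
  forall b, RS b -> RS (w *m b) & forall b, RS b -> RS (invmx w *m b)].

Lemma srefl_preserving a : RS a -> root_preserving (srefl a).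
Proof.
move=> Ha; split=> [|b|b]; rewrite ?invmx_srefl //; [exact: srefl_unitmx | exact: srefl_root..].
Qed.

Lemma gen_preserving (G0 : mx -> Prop) w :
  (forall t, G0 t -> root_preserving t) -> gen G0 w -> root_preserving w.
Proof.
move=> H; elim=> [|g /H //|g h _ [U1 A1 B1] _ [U2 A2 B2]|g _ [U A B]].
- by split; [exact: unitmx1 | move=> b; rewrite mul1mx | move=> b; rewrite invmx1 mul1mx].
- split; first by rewrite unitmx_mul U1.
    by move=> b Hb; rewrite -mulmxA; apply/A1/A2.
  by move=> b Hb; rewrite invmxM // -mulmxA; apply/B2/B1.
- by split; rewrite ?unitmx_inv ?invmxK.
Qed.

Lemma srefl_conj w a : root_preserving w -> RS a ->
  srefl (w *m a) = w *m srefl a *m invmx w.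
Proof.
move=> [U A B] Ha; set c := coroot a *m invmx w.
have E : refl (w *m a) c = w *m srefl a *m invmx w.
  by rewrite /refl /srefl /c mulmxBr mulmx1 mulmxBl mulmxV // !mulmxA.
suff /(coroot_uniq (A _ Ha)) cE : coroot_for RS (w *m a) c by rewrite /srefl -cE E.
split; first by rewrite /pair /c -mulmxA (mulKmx U); exact: pair_coroot_self.
move=> b Hb; split; first by rewrite E -!mulmxA; apply/A/(srefl_root Ha)/B.
have [z Hz] := coroot_int Ha (B _ Hb); exists z.
by rewrite /pair /c -mulmxA -Hz.
Qed.

(* s_a composed with refl a c maps y to y + f(y) a, where f = c - coroot a
   vanishes on a; hence x + k f(x) a lies in S for every k, and finiteness
   forces f(x) = 0. *)
Lemma coroot_for_agree (S : vec -> Prop) a c : (forall x, S x -> RS x) -> S a ->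
  (forall y, S y -> S (srefl a *m y)) -> coroot_for S a c ->
  forall x, S x -> pair c x = pair (coroot a) x.
Proof.
move=> S_root Sa S_srefl [ca Hc] x Sx; have Ra := S_root _ Sa.
have cra := pair_coroot_self Ra.
pose f y := pair c y - pair (coroot a) y.
have f_shift (k : R) : f (x + k *: a) = f x.
  by rewrite /f !pairD !pairZ ca cra; ring.
have step y : S y -> S (y + f y *: a).
  move=> Sy; have := S_srefl _ (Hc y Sy).1; congr S.
  rewrite sreflE reflE pairB pairZ cra /f; vring.
have iter (k : nat) : S (x + (k%:R * f x) *: a).
  elim: k => [|k IH]; first by rewrite mul0r scale0r addr0.
  have := step _ IH; rewrite f_shift -addrA -scalerDl; congr (S (_ + _ *: _)).
  by rewrite -natr1; ring.
apply/eqP; rewrite -subr_eq0; apply: contraT => fx.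
pose L := map (fun k : nat => x + (k%:R * f x) *: a) (iota 0 (size roots).+1).
have uL : uniq L.
  rewrite map_inj_in_uniq ?iota_uniq // => k1 k2 _ _ /addrI /eqP.
  rewrite -subr_eq0 -scalerBl scaler_eq0 (negbTE (root_neq0 Ra)) orbF.
  by rewrite -mulrBl mulf_eq0 (negbTE fx) orbF subr_eq0 eqr_nat => /eqP.
have sL : {subset L <= roots} by move=> _ /mapP[k _ ->]; apply/rootsP/S_root/iter.
by have := uniq_leq_size uL sL; rewrite size_map size_iota ltnn.
Qed.

(** * Words in reflections *)

Definition wordmx (ws : seq vec) : mx := foldr (fun x M => srefl x *m M) 1%:M ws.

Lemma wordmx_cat ws1 ws2 : wordmx (ws1 ++ ws2) = wordmx ws1 *m wordmx ws2.
Proof. by elim: ws1 => [|x ws IH] /=; rewrite ?mul1mx // IH mulmxA. Qed.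

Lemma wordmx_rcons ws x : wordmx (rcons ws x) = wordmx ws *m srefl x.
Proof. by rewrite -cats1 wordmx_cat /= mulmx1. Qed.

Lemma wordmx_rev ws : {in ws, forall x, RS x} -> wordmx ws *m wordmx (rev ws) = 1%:M.
Proof.
elim: ws => [|x ws IH] /=; first by rewrite mulmx1.
move=> H; have Hx := H x (mem_head x ws).
have Hws : {in ws, forall y, RS y} by move=> y ys; apply: H; rewrite in_cons ys orbT.
rewrite rev_cons wordmx_rcons mulmxA -(mulmxA (srefl x)) IH //.
by rewrite mulmx1 srefl_invol.
Qed.

Definition spelled (L : seq vec) (M : mx) := exists2 ws, all [in L] ws & wordmx ws = M.

Lemma spelled_size L M : spelled L M ->
  exists k, `[< exists ws, [/\ all [in L] ws, wordmx ws = M & size ws = k] >].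
Proof. by case=> ws Lws wsM; exists (size ws); apply/asboolP; exists ws. Qed.

Definition wlength (L : seq vec) (M : mx) : nat :=
  if pselect (spelled L M) is left sp then ex_minn (spelled_size sp) else 0.

Lemma wlength_word L M : spelled L M ->
  exists ws, [/\ all [in L] ws, wordmx ws = M & size ws = wlength L M].
Proof.
move=> sp; rewrite /wlength; case: pselect => [{}sp|//].
by case: ex_minnP => m /asboolP[ws H] _; exists ws.
Qed.

Lemma wlength_min L M ws : all [in L] ws -> wordmx ws = M -> (wlength L M <= size ws)%N.
Proof.
move=> Lws wsM; rewrite /wlength; case: pselect => [sp|[]]; last by exists ws.
by case: ex_minnP => k _; apply; apply/asboolP; exists ws.
Qed.

Lemma wlength0 L M : spelled L M -> wlength L M = 0%N -> M = 1%:M.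
Proof. by move=> /wlength_word[ws [_ <- <-]] /size0nil ->. Qed.

Lemma wlength1 L : wlength L 1%:M = 0%N.
Proof. by apply/eqP; rewrite -leqn0; exact: (@wlength_min _ _ [::]). Qed.

Lemma spelledM L v u : spelled L v -> spelled L u -> spelled L (v *m u).
Proof.
move=> [ws1 H1 <-] [ws2 H2 <-]; exists (ws1 ++ ws2); last exact: wordmx_cat.
by rewrite all_cat H1.
Qed.

Lemma spelled_srefl L a : a \in L -> spelled L (srefl a).
Proof. by move=> aL; exists [:: a]; rewrite /= ?aL ?mulmx1. Qed.

Lemma wlengthM L L' v u : {subset L' <= L} -> spelled L v -> spelled L' u ->
  (wlength L (v *m u) <= wlength L v + wlength L' u)%N.
Proof.
move=> sub /wlength_word[ws1 [H1 E1 <-]] /wlength_word[ws2 [H2 E2 <-]].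
rewrite -size_cat; apply: wlength_min; last by rewrite wordmx_cat E1 E2.
by rewrite all_cat H1; apply/allP => t /(allP H2) /sub.
Qed.

Lemma wlength_srefl_mull L u a : a \in L -> spelled L u ->
  (wlength L (srefl a *m u) <= (wlength L u).+1)%N.
Proof.
move=> aL /wlength_word[ws [H1 E1 <-]].
by apply: (@wlength_min _ _ (a :: ws)); rewrite /= ?aL ?E1.
Qed.

Lemma spelled_letters L L' M : (forall x, x \in L -> spelled L' (srefl x)) ->
  spelled L M -> spelled L' M.
Proof.
move=> H [ws + <-]; elim: ws => [|x ws IH] /=; first by exists [::].
by move=> /andP[xL /IH]; apply: spelledM; exact: H.
Qed.

Lemma spelled_inv L M : {in L, forall x, RS x} -> spelled L M -> spelled L (invmx M).
Proof.
move=> LR [ws Lws <-]; exists (rev ws); first by rewrite all_rev.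
by apply/esym/mulmx1_invmx/wordmx_rev => x /(allP Lws) /LR.
Qed.

(** * Rank two *)

Section Rank2.
Variables a b : vec.
Hypotheses (Ha : RS a) (Hb : RS b) (ab : a != b) (bNa : b != - a).
Local Notation k := (pair (coroot a) b).
Local Notation l := (pair (coroot b) a).
Local Notation ab2 := [:: a; b].

(* The action of s_a (is_a = true) or s_b on the coordinates (p, q) of p a + q b. *)
Definition rank2_act (is_a : bool) (pq : R * R) : R * R :=
  if is_a then (- pq.1 - k * pq.2, pq.2) else (pq.1, - l * pq.1 - pq.2).

Definition rank2_coords (ws : seq vec) (pq : R * R) : R * R :=
  foldr rank2_act pq [seq x == a | x <- ws].

Lemma wordmx_rank2 ws p q : all [in ab2] ws ->
  wordmx ws *m (p *: a + q *: b) =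
  (rank2_coords ws (p, q)).1 *: a + (rank2_coords ws (p, q)).2 *: b.
Proof.
elim: ws => [|x ws IH] /=; first by rewrite mul1mx.
rewrite !inE => /andP[xab /IH {}IH]; rewrite -mulmxA IH.
have -> : rank2_coords (x :: ws) (p, q) = rank2_act (x == a) (rank2_coords ws (p, q)) by [].
case/orP: xab => /eqP->; rewrite ?eqxx ?[b == a]eq_sym ?(negbTE ab) /rank2_act /=;
  rewrite sreflE pairD !pairZ pair_coroot_self //; vring.
Qed.

Lemma rank2_det_neq0 : 4 - k * l != 0.
Proof. by rewrite subr_eq0 gt_eqF // cartan_prod_lt4 // eq_sym. Qed.

Lemma rank2_decomp x : exists p q x0,
  [/\ x = p *: a + q *: b + x0, pair (coroot a) x0 = 0 & pair (coroot b) x0 = 0].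
Proof.
have D := rank2_det_neq0.
set A := pair (coroot a) x; set B := pair (coroot b) x.
set p := (2 * A - k * B) / (4 - k * l); set q := (2 * B - l * A) / (4 - k * l).
exists p, q, (x - (p *: a + q *: b)); split; first by rewrite addrC subrK.
  by rewrite pairB pairD !pairZ pair_coroot_self // -/A /p /q; field.
by rewrite pairB pairD !pairZ pair_coroot_self // -/B /p /q; field.
Qed.

Lemma wordmx_fix ws x0 : all [in ab2] ws ->
  pair (coroot a) x0 = 0 -> pair (coroot b) x0 = 0 -> wordmx ws *m x0 = x0.
Proof.
move=> + h1 h2; elim: ws => [|x ws IH] /=; first by rewrite mul1mx.
rewrite !inE => /andP[xab /IH {}IH]; rewrite -mulmxA IH.
by case/orP: xab => /eqP->; rewrite sreflE ?h1 ?h2 scale0r subr0.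
Qed.

Lemma wordmx_rank2_eq ws1 ws2 : all [in ab2] ws1 -> all [in ab2] ws2 ->
  rank2_coords ws1 (1, 0) = rank2_coords ws2 (1, 0) ->
  rank2_coords ws1 (0, 1) = rank2_coords ws2 (0, 1) -> wordmx ws1 = wordmx ws2.
Proof.
move=> H1 H2 E1 E2; apply: mulmx_colP => x.
have [p [q [x0 [-> h1 h2]]]] := rank2_decomp x.
have -> : p *: a + q *: b = p *: (1 *: a + 0 *: b) + q *: (0 *: a + 1 *: b) by vring.
rewrite !mulmxDr (wordmx_fix H1 h1 h2) (wordmx_fix H2 h1 h2) -!scalemxAr.
by rewrite !wordmx_rank2 // E1 E2.
Qed.

Lemma rank2_reduced_alternating u us : all [in ab2] us -> wordmx us = u ->
  size us = wlength ab2 u -> (wlength ab2 u <= wlength ab2 (u *m srefl a))%N ->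
  us = alternating b a (size us).
Proof.
move=> Hus Eu Su Hlen; apply: alternatingP; rewrite 1?eq_sym //.
- by apply/allP => t /(allP Hus); rewrite !inE orbC.
- move=> p q t E; have Rt : RS t.
    by have := allP Hus t; rewrite E mem_cat mem_head orbT !inE => /(_ isT) /orP[] /eqP->.
  have : (wlength ab2 u <= size (p ++ q))%N.
    apply: wlength_min; first by move: Hus; rewrite E !all_cat /= => /and3P[-> _ /andP[_ ->]].
    by rewrite -Eu E !wordmx_cat /= (mulmxA (srefl t)) srefl_invol // mul1mx.
  by rewrite -Su E !size_cat /= !addnS ltnNge leqW.
- move=> us' E; have : (wlength ab2 (u *m srefl a) <= size us')%N.
    apply: wlength_min; first by move: Hus; rewrite E all_rcons => /andP[].
    by rewrite -Eu E wordmx_rcons -mulmxA srefl_invol // mulmx1.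
  by move=> /(leq_trans Hlen); rewrite -Su E size_rcons ltnn.
Qed.

Definition rank2_nonneg (pq : R * R) := (0 <= pq.1) && (0 <= pq.2).

Lemma rank2_cone m u : (0 < m)%N -> wordmx (alternating b a m) = wordmx (alternating a b m) ->
  all (fun j => rank2_nonneg (rank2_coords (alternating b a j) (1, 0))) (iota 0 m) ->
  spelled ab2 u -> (wlength ab2 u <= wlength ab2 (u *m srefl a))%N ->
  exists p q, [/\ 0 <= p, 0 <= q & u *m a = p *: a + q *: b].
Proof.
move=> m0 braid Hpos Hu Hlen; have [us [Hus Eu Su]] := wlength_word Hu.
have usE := rank2_reduced_alternating Hus Eu Su Hlen.
have aL : a \in ab2 by rewrite mem_head.
have bL : b \in ab2 by rewrite !inE eqxx orbT.
have jm : (size us < m)%N.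
  rewrite ltnNge; apply/negP => /subnK iE.
  move: (size us - m)%N iE => i iE; case: m m0 braid Hpos iE => // m _ braid _ iE.
  set x := if odd m.+1 then a else b; set y := if odd m.+1 then b else a.
  have xyL : all [in ab2] (alternating x y i) by apply: all_alternating; rewrite /x /y; case: odd.
  have : (wlength ab2 (u *m srefl a) <= size (alternating x y i ++ alternating b a m))%N.
    apply: wlength_min; first by rewrite all_cat xyL all_alternating.
    rewrite wordmx_cat -Eu usE -iE alternating_add wordmx_cat braid /= wordmx_rcons.
    by rewrite -!mulmxA srefl_invol // mulmx1.
  by move/(leq_trans Hlen); rewrite size_cat !size_alternating -Su -iE addnS ltnn.
have /andP[F1 F2] : rank2_nonneg (rank2_coords us (1, 0)).
  by rewrite {1}usE; apply: (allP Hpos); rewrite mem_iota.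
exists (rank2_coords us (1, 0)).1, (rank2_coords us (1, 0)).2; split => //.
by have := wordmx_rank2 1 0 Hus; rewrite scale1r scale0r addr0 Eu.
Qed.

Lemma rank2_braid m :
  rank2_coords (alternating b a m) (1, 0) = rank2_coords (alternating a b m) (1, 0) ->
  rank2_coords (alternating b a m) (0, 1) = rank2_coords (alternating a b m) (0, 1) ->
  wordmx (alternating b a m) = wordmx (alternating a b m).
Proof. by apply: wordmx_rank2_eq; apply: all_alternating; rewrite !inE eqxx ?orbT. Qed.

Lemma rank2_obtuse_cartan : ip a b <= 0 ->
  k = 0 /\ l = 0 \/ k = -1 /\ l = -1 \/ k = -1 /\ l = -2 \/ k = -2 /\ l = -1 \/
  k = -1 /\ l = -3 \/ k = -3 /\ l = -1.
Proof.
move=> ipab; have ba : b != a by rewrite eq_sym.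
have [k' [l' [Ek El kl sgt slt]]] := cartan_int Ha Hb ba bNa.
have k'le0 : (k' <= 0)%R by rewrite leNgt -(ltr0z R) -Ek pair_coroot_gt0 // -leNgt.
have l'le0 : (l' <= 0)%R by rewrite leNgt -sgt -leNgt.
have : (k' = 0 /\ l' = 0 \/ k' = -1 /\ l' = -1 \/ k' = -1 /\ l' = -2 \/ k' = -2 /\ l' = -1 \/
        k' = -1 /\ l' = -3 \/ k' = -3 /\ l' = -1)%R.
  by move: slt; case: ltrP; case: ltrP => //; nia.
by rewrite Ek El => -[[->->]|[[->->]|[[->->]|[[->->]|[[->->]|[->->]]]]]]; do ?[by left | right].
Qed.

(* The braid relations and the positivity are checked by computation for each
   obtuse Cartan matrix (types A1 x A1, A2, B2 and G2). *)
Lemma rank2_obtuse_cone u : ip a b <= 0 -> spelled ab2 u ->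
  (wlength ab2 u <= wlength ab2 (u *m srefl a))%N ->
  exists p q, [/\ 0 <= p, 0 <= q & u *m a = p *: a + q *: b].
Proof.
move=> ipab Hu Hlen; have ba : b != a by rewrite eq_sym.
have [[k0 l0]|[[k0 l0]|[[k0 l0]|[[k0 l0]|[[k0 l0]|[k0 l0]]]]]] := rank2_obtuse_cartan ipab;
  [ apply: (@rank2_cone 2 u isT (rank2_braid _ _) _ Hu Hlen)
  | apply: (@rank2_cone 3 u isT (rank2_braid _ _) _ Hu Hlen)
  | apply: (@rank2_cone 4 u isT (rank2_braid _ _) _ Hu Hlen)
  | apply: (@rank2_cone 4 u isT (rank2_braid _ _) _ Hu Hlen)
  | apply: (@rank2_cone 6 u isT (rank2_braid _ _) _ Hu Hlen)
  | apply: (@rank2_cone 6 u isT (rank2_braid _ _) _ Hu Hlen) ];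
  rewrite /rank2_nonneg /rank2_coords; cbv beta iota delta [all iota];
  rewrite !map_alternating eqxx (negbTE ba) /rank2_act k0 l0;
  cbv beta iota delta [foldr alternating rcons fst snd];
  lazymatch goal with
  | |- (_, _) = _ => congr (_, _); ring
  | _ => rewrite ?andbT; do ?[apply/andP; split]; lra
  end.
Qed.

End Rank2.

(** * Cones spanned by obtuse sets of positive roots *)

Section Ordered.
Variable le : vec -> vec -> Prop.
Hypothesis leT : total_ordering le.
Local Notation pos := (positive le).
Local Notation vlt := (vlt le).

Definition obtuse (g : seq vec) := {in g &, forall x y, x != y -> ip x y <= 0}.

Lemma cone_single_root (g : seq vec) (f : vec -> R) a b : uniq g -> a \in g ->
  RS a -> pos a -> RS b -> pos b -> {in g, forall d, d != a -> f d = 0} ->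
  b = \sum_(d <- g) f d *: d -> b = a.
Proof.
move=> ug ag Ra pa Rb pb f0 bE.
have {}bE : b = f a *: a.
  rewrite bE (bigD1_seq a) //= big1_seq ?addr0 // => d /andP[da dg].
  by rewrite f0 ?scale0r.
have [f1|f1] := RSred Ra (eq_ind _ RS Rb _ bE); first by rewrite bE f1 scale1r.
by move: pb; rewrite bE f1 scaleN1r => /(positiveN leT pa).
Qed.

Section ObtuseCone.
Variable g : seq vec.
Hypotheses (g_uniq : uniq g) (g_root : {in g, forall x, RS x}).
Hypotheses (g_pos : {in g, forall x, pos x}) (g_obtuse : obtuse g).

Definition in_cone (v : vec) :=
  exists2 f : vec -> R, {in g, forall d, 0 <= f d} & v = \sum_(d <- g) f d *: d.

Lemma in_cone_mem a : a \in g -> in_cone a.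
Proof.
move=> ag; exists (fun d => (d == a)%:R) => [d _|]; first exact: ler0n.
rewrite (bigD1_seq a) //= eqxx scale1r big1_seq ?addr0 // => d /andP[/negbTE-> _].
by rewrite scale0r.
Qed.

Lemma in_cone_comb v1 v2 p q : 0 <= p -> 0 <= q -> in_cone v1 -> in_cone v2 ->
  in_cone (p *: v1 + q *: v2).
Proof.
move=> p0 q0 [f1 F1 ->] [f2 F2 ->]; exists (fun d => p * f1 d + q * f2 d).
  by move=> d dg; rewrite addr_ge0 ?mulr_ge0 ?F1 ?F2.
rewrite !scaler_sumr -big_split; apply: eq_bigr => d _ /=.
by rewrite scalerDl !scalerA.
Qed.

(* The standard parabolic factorisation w = v u with respect to the rank-2
   subgroup generated by a and b, v of minimal length. *)
Lemma parabolic_decomposition w a b : spelled g w -> a \in g -> b \in g ->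
  exists v u, [/\ spelled g v /\ spelled [:: a; b] u, w = v *m u,
    (wlength g v + wlength [:: a; b] u = wlength g w)%N,
    {in [:: a; b], forall c, (wlength g v <= wlength g (v *m srefl c))%N} &
    (wlength g (w *m srefl b) < wlength g w -> wlength g v < wlength g w)%N].
Proof.
move=> Hw ag bg; set L2 := [:: a; b].
have sub : {subset L2 <= g} by move=> t; rewrite !inE => /orP[] /eqP->.
pose A v := spelled g v /\ exists u,
  [/\ spelled L2 u, w = v *m u & (wlength g v + wlength L2 u = wlength g w)%N].
have A_w : A w.
  by split=> //; exists 1%:M; split; [exists [::] | rewrite mulmx1 | rewrite wlength1 addn0].
have Pex : exists k, `[< exists v, A v /\ wlength g v = k >].
  by exists (wlength g w); apply/asboolP; exists w.
have [k /asboolP[v [[Hv [u [Hu wE sE]]] vk]] kmin] := ex_minnP Pex.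
have vmin v' : A v' -> (wlength g v <= wlength g v')%N.
  by move=> Av'; rewrite vk; apply: kmin; apply/asboolP; exists v'.
exists v, u; split => //.
  move=> c cL; rewrite leqNgt; apply/negP => lt_vc.
  have Rc := g_root (sub c cL); have Ic := srefl_invol Rc.
  have wE' : w = v *m srefl c *m (srefl c *m u).
    by rewrite wE -mulmxA (mulmxA (srefl c)) Ic mul1mx.
  have Hvc : spelled g (v *m srefl c) by apply: spelledM => //; exact/spelled_srefl/sub.
  have Hcu : spelled L2 (srefl c *m u) by apply: spelledM => //; exact: spelled_srefl.
  suff /vmin : A (v *m srefl c) by rewrite leqNgt lt_vc.
  split=> //; exists (srefl c *m u); split=> //; apply/eqP; rewrite eqn_leq; apply/andP; split.
    rewrite -sE; apply: leq_trans (leq_add (leqnn _) (wlength_srefl_mull cL Hu)) _.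
    by rewrite addnS -addSn leq_add2r.
  by rewrite {1}wE'; exact: wlengthM.
have Ib := srefl_invol (g_root bg).
move=> lt_wb; suff /vmin le_v : A (w *m srefl b) by exact: leq_ltn_trans le_v lt_wb.
split.
  by apply: spelledM Hw _; exact: spelled_srefl.
have bL : b \in L2 by rewrite !inE eqxx orbT.
exists (srefl b); split; [exact: spelled_srefl | by rewrite -mulmxA Ib mulmx1 |].
have lb : (wlength L2 (srefl b) <= 1)%N.
  by apply: (@wlength_min _ _ [:: b]); rewrite /= ?bL ?mulmx1.
apply/eqP; rewrite eqn_leq; apply/andP; split.
  by apply: leq_trans (leq_add (leqnn _) lb) _; rewrite addn1 lt_wb.
have {1}-> : w = w *m srefl b *m srefl b by rewrite -mulmxA Ib mulmx1.
by apply: wlengthM => //; [apply: spelledM Hw _; exact: spelled_srefl | exact: spelled_srefl].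
Qed.

Lemma word_cone w a : spelled g w -> a \in g ->
  (wlength g w <= wlength g (w *m srefl a))%N -> in_cone (w *m a).
Proof.
move: {2}(wlength g w).+1 (ltnSn (wlength g w)) => N.
elim: N w a => [//|N IH] w a wN Hw ag Hlen.
case Elw: (wlength g w) => [|m].
  by rewrite (wlength0 Hw Elw) mul1mx; exact: in_cone_mem.
have [ws [Hws Ew Sw]] := wlength_word Hw.
case/lastP: ws Hws Ew Sw => [|ws b]; first by rewrite Elw.
rewrite all_rcons => /andP[bg Hws] Ew Sw.
have lt_wb : (wlength g (w *m srefl b) < wlength g w)%N.
  rewrite -Sw size_rcons -Ew wordmx_rcons -mulmxA (srefl_invol (g_root bg)) mulmx1.
  exact: wlength_min.
have ab : a != b by apply: contraTneq Hlen => ->; rewrite -ltnNge.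
have aL : a \in [:: a; b] by rewrite mem_head.
have [v [u [[Hv Hu] wE sE vmin /(_ lt_wb) vlt]]] := parabolic_decomposition Hw ag bg.
have Hua : (wlength [:: a; b] u <= wlength [:: a; b] (u *m srefl a))%N.
  rewrite leqNgt; apply: contraL Hlen => lt_ua; rewrite -ltnNge -sE wE -mulmxA.
  apply: leq_ltn_trans (wlengthM _ Hv (spelledM Hu (spelled_srefl aL))) _.
    by move=> t; rewrite !inE => /orP[] /eqP->.
  by rewrite ltn_add2l.
have [p [q [p0 q0 uaE]]] := rank2_obtuse_cone (g_root ag) (g_root bg) ab
  (positive_neqN leT (g_pos ag) (g_pos bg)) (g_obtuse ag bg ab) Hu Hua.
have vN : (wlength g v < N)%N by apply: leq_trans vlt _; rewrite -ltnS.
rewrite wE -mulmxA uaE mulmxDr -!scalemxAr; apply: in_cone_comb => //; apply: IH => //.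
  by apply: vmin; rewrite mem_head.
by apply: vmin; rewrite !inE eqxx orbT.
Qed.

Lemma word_cone_sign w a : spelled g w -> a \in g ->
  in_cone (w *m a) \/ in_cone (- (w *m a)).
Proof.
move=> Hw ag; have Ra := g_root ag.
have [h|h] := leqP (wlength g w) (wlength g (w *m srefl a)); first by left; exact: word_cone.
right; have Hw' : spelled g (w *m srefl a) by apply: spelledM => //; exact: spelled_srefl.
have := word_cone Hw' ag; rewrite -mulmxA srefl_invol // mulmx1 -mulmxA srefl_self // mulmxN.
by apply; exact: ltnW.
Qed.

(* Split the coefficients into positive and negative parts u, w: then
   sum u = sum w and, g being obtuse, ip (sum u) (sum w) <= 0. *)
Lemma obtuse_free (f : vec -> R) : \sum_(d <- g) f d *: d = 0 -> {in g, forall d, f d = 0}.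
Proof.
move=> f0; pose fp d := if 0 < f d then f d else 0; pose fm d := if f d < 0 then - f d else 0.
have fE d : f d = fp d - fm d.
  by rewrite /fp /fm; case: ltrgtP => h; rewrite ?subr0 ?sub0r ?opprK // -h subrr.
have fp0 d : 0 <= fp d by rewrite /fp; case: ifP => // /ltW.
have fm0 d : 0 <= fm d by rewrite /fm; case: ifP => // h; rewrite oppr_ge0 ltW.
set u := \sum_(d <- g) fp d *: d; set w := \sum_(d <- g) fm d *: d.
have uw : u = w.
  apply/eqP; rewrite -subr_eq0 -f0 /u /w -sumrB; apply/eqP/eq_bigr => d _.
  by rewrite -scalerBl -fE.
have ip_uw : ip u w <= 0.
  rewrite /u ip_suml big_seq; apply: sumr_le0 => c cg; rewrite ipZl /w ip_sumr.
  rewrite mulr_sumr big_seq; apply: sumr_le0 => d dg; rewrite ipZr mulrA.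
  rewrite /fp /fm; case: ifP => hc; last by rewrite !mul0r.
  case: ifP => hd; last by rewrite mulr0 mul0r.
  apply: mulr_ge0_le0; first by rewrite mulr_ge0 // ?oppr_ge0 ltW.
  by apply: g_obtuse => //; apply: contraTneq hc => ->; rewrite -leNgt; exact: ltW.
have u0 : u = 0.
  apply/eqP; apply: contraT => /ip_gt0; rewrite {2}uw.
  by rewrite ltNge ip_uw.
have zero_coef (h : vec -> R) : (forall d, 0 <= h d) -> \sum_(d <- g) h d *: d = 0 ->
    {in g, forall d, h d = 0}.
  move=> h0 hsum d dg; apply/eqP; apply: contraT => hd.
  suff : pos 0 by move/not_positive0.
  by rewrite -hsum; apply: (positive_sum leT (s := g) (f := h) (y := d)); rewrite // lt_def hd h0.
have w0 : w = 0 by rewrite -uw.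
by move=> d dg; rewrite fE (zero_coef _ fp0 u0) // (zero_coef _ fm0 w0) // subrr.
Qed.

End ObtuseCone.

(** * Nielsen reduction to an obtuse generating set *)

Lemma positive_root_reduction x y : RS x -> RS y -> pos x -> pos y -> x != y ->
  0 < ip x y ->
  (exists z, [/\ pos z, z = srefl x *m y \/ z = - (srefl x *m y) & vlt z y]) \/
  (exists z, [/\ pos z, z = srefl y *m x \/ z = - (srefl y *m x) & vlt z x]).
Proof.
move=> Hx Hy px py xy ipp.
wlog lt_xy : x y Hx Hy px py xy ipp / vlt x y.
  move=> W; have [|lt_yx] := vlt_total leT xy; first exact: W.
  by rewrite ipC in ipp; case: (W y x) => //; rewrite 1?eq_sym //; [right | left].
have yx : y != x by rewrite eq_sym.
have yNx := positive_neqN leT px py.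
have [k [l [Ek El kl sgt _]]] := cartan_int Hx Hy yx yNx.
have k0 : (0 < k)%R by rewrite -(ltr0z R) -Ek pair_coroot_gt0.
have l0 : (0 < l)%R by rewrite -sgt.
have nm := root_not_multiple Hx Hy yx yNx.
have Ex : srefl x *m y = y - k%:~R *: x by rewrite sreflE Ek.
have [k2|[k3 l1]] : (k <= 2)%R \/ (k = 3 /\ l = 1) by nia.
  left; rewrite Ex; apply: vlt_sub_scale; rewrite ?subr_eq0 ?ltr0z ?k0 //=.
  by rewrite -[2]/(2%:~R) ler_int.
have Ey : srefl y *m x = - (y - x) by rewrite sreflE El l1 scale1r opprB.
case: (vlt_sub_scale3 leT px lt_xy); rewrite ?subr_eq0 //.
- apply/eqP => /(congr1 (fun v => 2^-1 *: v)); rewrite !scalerA mulVf ?pnatr_eq0 // scale1r.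
  by apply/eqP; rewrite mulrC.
- by move=> h; left; rewrite Ex k3.
- move=> h; right; exists (y - x); split; [exact: lt_xy | by right; rewrite Ey opprK | exact: h].
Qed.

Lemma srefl_exchange x y z : RS x -> RS y ->
  z = srefl x *m y \/ z = - (srefl x *m y) -> srefl y = srefl x *m srefl z *m srefl x.
Proof.
move=> Hx Hy zE; have -> : srefl z = srefl (srefl x *m y) by case: zE => ->; rewrite ?sreflN.
rewrite (srefl_conj (srefl_preserving Hx) Hy) invmx_srefl // !mulmxA srefl_invol // mul1mx.
by rewrite -mulmxA srefl_invol // mulmx1.
Qed.

Definition positive_roots := [seq v <- roots | `[< pos v >]].

Definition below (y : vec) : nat := count (fun d => `[< vlt d y >]) positive_roots.

Definition weight (g : seq vec) : nat := \sum_(y <- g) 2 ^ below y.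

Lemma below_lt z y : RS z -> pos z -> vlt z y -> (below z < below y)%N.
Proof.
move=> Hz pz zy; apply: count_ltn_sub => [d /asboolP dz|]; first exact/asboolP/(vlt_trans leT dz).
exists z; split; last by apply/asboolP/vlt_irr.
  by rewrite mem_filter; apply/andP; split; [exact/asboolP | exact/rootsP].
exact/asboolP.
Qed.

Definition exchange (g : seq vec) (y z : vec) : seq vec :=
  if z \in g then rem y g else rcons (rem y g) z.

Lemma mem_exchange g y z v : uniq g -> z != y ->
  (v \in exchange g y z) = ((v \in g) && (v != y)) || (v == z).
Proof.
move=> ug zy; rewrite /exchange; case: ifP => zg.
  rewrite mem_rem_uniq // inE andbC.
  by have [->|] := eqVneq v z; rewrite ?zg ?zy ?orbT ?orbF.
by rewrite mem_rcons in_cons mem_rem_uniq // inE orbC andbC.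
Qed.

Lemma exchange_uniq g y z : uniq g -> uniq (exchange g y z).
Proof.
move=> ug; rewrite /exchange; case: ifP => zg; first exact: rem_uniq.
by rewrite rcons_uniq rem_uniq // andbT mem_rem_uniq // inE zg andbF.
Qed.

Lemma weight_exchange g y z : y \in g -> (below z < below y)%N ->
  (weight (exchange g y z) < weight g)%N.
Proof.
move=> yg lt_zy; rewrite /weight (perm_big _ (perm_to_rem yg)) big_cons /exchange.
have h : (2 ^ below z < 2 ^ below y)%N by rewrite ltn_exp2l.
case: ifP => _; first by rewrite -[X in (X < _)%N]add0n ltn_add2r expn_gt0.
by rewrite -cats1 big_cat big_seq1 /= addnC ltn_add2r.
Qed.

Section ReflectionClosed.
Variable S : vec -> Prop.
Hypothesis S_root : forall a, S a -> RS a.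
Hypothesis S_srefl : forall a b, S a -> S b -> S (srefl a *m b).

Lemma S_opp a : S a -> S (- a).
Proof. by move=> Sa; rewrite -(srefl_self (S_root Sa)); exact: S_srefl. Qed.

Definition generates (g : seq vec) := [/\ uniq g, {in g, forall x, S x /\ pos x} &
  forall v, S v -> exists2 a, a \in g & exists2 w, spelled g w & v = w *m a].

Section Exchange.
Variables (g : seq vec) (x y z : vec).
Hypotheses (gen_g : generates g) (xg : x \in g) (yg : y \in g) (xy : x != y).
Hypotheses (pz : pos z) (zE : z = srefl x *m y \/ z = - (srefl x *m y)) (zy : vlt z y).

Let ug : uniq g. Proof. by case: gen_g. Qed.
Let Sg : {in g, forall x, S x /\ pos x}. Proof. by case: gen_g. Qed.
Let Sx : S x. Proof. by case: (Sg xg). Qed.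
Let Sy : S y. Proof. by case: (Sg yg). Qed.
Let Sz : S z. Proof. by case: zE => ->; [| apply: S_opp]; exact: S_srefl. Qed.
Let Rx : RS x := S_root Sx.
Let Ry : RS y := S_root Sy.
Let Rz : RS z := S_root Sz.
Let srefl_z : srefl z = srefl x *m srefl y *m invmx (srefl x).
Proof.
have -> : srefl z = srefl (srefl x *m y) by case: zE => ->; rewrite ?sreflN.
exact: srefl_conj (srefl_preserving Rx) Ry.
Qed.
Let z_neq_y : z != y. Proof. by apply/eqP => E; move: zy; rewrite E; apply: vlt_irr. Qed.
Let mem_ex v : (v \in exchange g y z) = ((v \in g) && (v != y)) || (v == z).
Proof. exact: mem_exchange ug z_neq_y. Qed.

Lemma spelled_exchange M : spelled g M -> spelled (exchange g y z) M.
Proof.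
apply: spelled_letters => t tg; have [->|ty] := eqVneq t y.
  rewrite (srefl_exchange Rx Ry zE).
  by apply: spelledM; [apply: spelledM|]; apply: spelled_srefl; rewrite mem_ex ?xg ?xy ?eqxx ?orbT.
by apply: spelled_srefl; rewrite mem_ex tg ty.
Qed.

Lemma generates_exchange : generates (exchange g y z).
Proof.
have [_ _ gen] := gen_g; split; first exact: exchange_uniq.
  by move=> t; rewrite mem_ex => /orP[/andP[/Sg //] | /eqP->].
have xe : x \in exchange g y z by rewrite mem_ex xg xy.
have ze : z \in exchange g y z by rewrite mem_ex eqxx orbT.
move=> v /gen [a ag [w /spelled_exchange sw ->]]; have [ay|ay] := eqVneq a y; last first.
  by exists a; [rewrite mem_ex ag ay | exists w].
exists z => //; case: zE => E.
  exists (w *m srefl x); first exact/spelledM/spelled_srefl.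
  by rewrite E -mulmxA (mulmxA (srefl x)) srefl_invol // mul1mx ay.
exists (w *m srefl x *m srefl z); first by apply/spelledM/spelled_srefl => //; exact/spelledM/spelled_srefl.
by rewrite -!mulmxA srefl_self // E opprK (mulmxA (srefl x)) srefl_invol // mul1mx ay.
Qed.

Lemma nielsen_step_exchange : nielsen_step (map srefl g) (map srefl (exchange g y z)).
Proof.
have srefl_eq u v : u \in g -> v \in g -> srefl u = srefl v -> u = v.
  move=> /Sg[Su pu] /Sg[Sv pv].
  exact: srefl_inj (S_root Su) (S_root Sv) (positive_neqN leT pu pv).
exists (srefl x), (srefl y); split; rewrite ?map_f //.
  by apply/eqP => /(srefl_eq _ _ xg yg) /eqP; apply/negP.
move=> t; split.
  move=> /mapP[w]; rewrite mem_ex => /orP[/andP[wg wy]|/eqP->] ->; last first.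
    by right; rewrite srefl_z.
  left; split; first exact: map_f.
  by apply: contra wy => /eqP /(srefl_eq _ _ wg yg) ->.
move=> [[/mapP[w wg ->] wy]|->]; last by rewrite -srefl_z map_f // mem_ex eqxx orbT.
by rewrite map_f // mem_ex wg; apply/orP; left; apply: contraNN wy => /eqP->.
Qed.

Lemma exchange_progress : [/\ generates (exchange g y z),
  nielsen_step (map srefl g) (map srefl (exchange g y z)) &
  (weight (exchange g y z) < weight g)%N].
Proof.
split; [exact: generates_exchange | exact: nielsen_step_exchange |].
exact: weight_exchange yg (below_lt Rz pz zy).
Qed.

End Exchange.

Lemma nielsen_obtuse g (A : seq mx) : generates g -> A =i map srefl g ->
  exists B g', [/\ nielsen_reach A B, B =i map srefl g', generates g' & obtuse g'].
Proof.
move: {2}(weight g).+1 (ltnSn (weight g)) => N.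
elim: N g A => [//|N IH] g A wN gen_g EA.
have [[x [y [xg yg xy ipp]]]|obt] :=
  pselect (exists x y, [/\ x \in g, y \in g, x != y & 0 < ip x y]); last first.
  exists A, g; split => //; first exact: rt_refl.
  by move=> x y xg yg xy; rewrite leNgt; apply/negP => h; apply: obt; exists x, y.
have step x' y' z : x' \in g -> y' \in g -> x' != y' -> pos z ->
    z = srefl x' *m y' \/ z = - (srefl x' *m y') -> vlt z y' ->
    exists B g', [/\ nielsen_reach A B, B =i map srefl g', generates g' & obtuse g'].
  move=> x'g y'g x'y' pz zE zy.
  have [gen' step' lt'] := exchange_progress gen_g x'g y'g x'y' pz zE zy.
  have [B [g' [r1 r2 r3 r4]]] := IH _ _ (leq_trans lt' wN) gen' (fun t => erefl).
  exists B, g'; split => //; apply: rt_trans r1; apply: rt_step.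
  exact: nielsen_step_eq_mem EA step'.
have [_ Sg _] := gen_g; have [Sx px] := Sg x xg; have [Sy py] := Sg y yg.
have [[z [pz zE zy]]|[z [pz zE zx]]] :=
  positive_root_reduction (S_root Sx) (S_root Sy) px py xy ipp.
  exact: step xg yg xy pz zE zy.
by apply: step yg xg _ pz zE zx; rewrite eq_sym.
Qed.

(** * An obtuse generating set is the base *)

Lemma S_sub a d : S a -> S d -> a != d -> d != - a -> 0 < ip a d -> S (a - d).
Proof.
move=> Sa Sd ad dNa ipp; have Ra := S_root Sa; have Rd := S_root Sd.
have da : d != a by rewrite eq_sym.
have [k [l [Ek El kl sgt _]]] := cartan_int Ra Rd da dNa.
have k0 : (0 < k)%R by rewrite -(ltr0z R) -Ek pair_coroot_gt0.
have l0 : (0 < l)%R by rewrite -sgt.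
have [k1|l1] : k = 1 \/ l = 1 by nia.
  by have := S_opp (S_srefl Sa Sd); rewrite sreflE Ek k1 scale1r opprB.
by have := S_srefl Sd Sa; rewrite sreflE El l1 scale1r.
Qed.

Section ObtuseBase.
Variable g : seq vec.
Hypotheses (gen_g : generates g) (g_obtuse : obtuse g).

Let g_uniq : uniq g. Proof. by case: gen_g. Qed.
Let g_S : {in g, forall x, S x}. Proof. by case: gen_g => _ Sg _ x /Sg[]. Qed.
Let g_root : {in g, forall x, RS x}. Proof. by move=> x /g_S/S_root. Qed.
Let g_pos : {in g, forall x, pos x}. Proof. by case: gen_g => _ Sg _ x /Sg[]. Qed.
Let g_free := obtuse_free g_pos g_obtuse.

Lemma positive_root_in_cone b : S b -> pos b -> in_cone g b.
Proof.
move=> Sb pb; have [_ _ /(_ b Sb) [a ag [w Hw bE]]] := gen_g.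
case: (word_cone_sign g_uniq g_root g_pos g_obtuse Hw ag); rewrite -bE // => -[f F bf].
exfalso; apply: (positiveN leT pb); split.
  by rewrite bf; apply: (nonneg_sum leT) => [x /g_pos[]|x /F].
by move/eqP; rewrite oppr_eq0 => /eqP; case: pb.
Qed.

Lemma cone_sum_support x y d (f h : vec -> R) : d \in g ->
  {in g, forall t, 0 <= f t} -> {in g, forall t, 0 <= h t} ->
  x = \sum_(t <- g) f t *: t -> y = \sum_(t <- g) h t *: t -> x + y = d ->
  {in g, forall t, t != d -> f t = 0}.
Proof.
move=> dg F H xE yE xyd t tg td.
pose c t := f t + h t - (t == d)%:R.
have c0 : \sum_(t <- g) c t *: t = 0.
  rewrite /c; under eq_bigr => u _ do rewrite scalerBl scalerDl.
  rewrite sumrB big_split /= -xE -yE xyd (bigD1_seq d) //= eqxx scale1r.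
  by rewrite big1_seq ?addr0 ?subrr // => u /andP[/negbTE-> _]; rewrite scale0r.
have /eqP := g_free c0 tg; rewrite /c (negbTE td) subr0.
by rewrite paddr_eq0 ?(F t tg) ?(H t tg) // => /andP[/eqP].
Qed.

Lemma mem_base a : a \in g -> base le S a.
Proof.
move=> ag; split; first exact: g_S; split; first exact: g_pos.
move=> [b [c [Sb [pb [Sc [pc abc]]]]]].
have [fb Fb bE] := positive_root_in_cone Sb pb.
have [fc Fc cE] := positive_root_in_cone Sc pc.
have fb0 := cone_sum_support ag Fb Fc bE cE (esym abc).
have ba := cone_single_root g_uniq ag (g_root ag) (g_pos ag) (S_root Sb) pb fb0 bE.
by case: pc => _; apply; apply: (addrI a); rewrite addr0 -{1}ba -abc.
Qed.

Lemma base_mem a : base le S a -> a \in g.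
Proof.
move=> [Sa [pa nd]]; have Ra := S_root Sa.
have [f F aE] := positive_root_in_cone Sa pa.
have [d [dg fd ipd]] : exists d, [/\ d \in g, 0 < f d & 0 < ip a d].
  apply: contrapT => H; have := ip_gt0 (root_neq0 Ra).
  rewrite {2}aE ip_sumr big_seq ltNge => /negP; apply; apply: sumr_le0 => d dg.
  rewrite ipZr; have := F d dg; rewrite le0r => /orP[/eqP->|fd]; first by rewrite mul0r.
  by rewrite pmulr_rle0 // leNgt; apply/negP => ipd; apply: H; exists d.
have [->//|ad] := eqVneq a d.
have Sd := g_S dg; have pd := g_pos dg.
have Sad := S_sub Sa Sd ad (positive_neqN leT pa pd) ipd.
case: (positive_trichotomy leT (a - d)) => [h|[/eqP|h]].
- by case: nd; exists d, (a - d); rewrite [d + _]addrC subrK.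
- by rewrite subr_eq0 (negbTE ad).
- have [h' H' dE] := positive_root_in_cone (S_opp Sad) h.
  have dsum : a + - (a - d) = d by rewrite opprB addrC subrK.
  have f0 := cone_sum_support dg F H' aE dE dsum.
  by rewrite (cone_single_root g_uniq dg (g_root dg) pd Ra pa f0 aE).
Qed.

Lemma obtuse_base a : base le S a <-> a \in g.
Proof. by split; [exact: base_mem | exact: mem_base]. Qed.

End ObtuseBase.

End ReflectionClosed.
End Ordered.

(** * The subsystem generated by the reflections t_i *)

Section Subsystem.
Variable TB : seq (vec * mx).
Hypothesis TB_refl : forall p, p \in TB -> RS p.1 /\ refl_in RS p.1 p.2.

Local Notation Ts := [seq p.2 | p <- TB].
Local Notation betas := [seq p.1 | p <- TB].

Definition W' := gen (fun t => t \in Ts).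
Definition R' := fun v => exists w b, [/\ W' w, b \in betas & v = w *m b].
Definition V' := lspan R'.

Lemma betas_root b : b \in betas -> RS b /\ srefl b \in Ts.
Proof.
move=> /mapP[p pT ->]; have [Rp /(refl_inE _ Rp) E] := TB_refl pT.
by split => //; apply/mapP; exists p.
Qed.

Lemma Ts_srefl t : t \in Ts -> exists2 b, b \in betas & t = srefl b.
Proof.
move=> /mapP[p pT ->]; have [Rp /(refl_inE _ Rp) E] := TB_refl pT.
by exists p.1; first exact: map_f.
Qed.

Lemma W'_preserving w : W' w -> root_preserving w.
Proof.
apply: gen_preserving => t /Ts_srefl[b /betas_root[Rb _] ->].
exact: srefl_preserving.
Qed.

Lemma R'_root v : R' v -> RS v.
Proof.
move=> [w [b [/W'_preserving[_ Hw _] /betas_root[Rb _] ->]]]; exact: Hw.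
Qed.

Lemma R'_mul w v : W' w -> R' v -> R' (w *m v).
Proof.
move=> Hw [w' [b [Hw' Hb ->]]]; exists (w *m w'), b; split => //; last by rewrite mulmxA.
exact: gen_mul.
Qed.

Lemma R'_beta b : b \in betas -> R' b.
Proof. by move=> Hb; exists 1%:M, b; split; rewrite ?mul1mx //; exact: gen_one. Qed.

Lemma W'_srefl a : R' a -> W' (srefl a).
Proof.
move=> [w [b [Hw /betas_root[Rb Tb] ->]]].
rewrite (srefl_conj (W'_preserving Hw) Rb).
by apply: gen_mul; [apply: gen_mul => //; exact: gen_base | exact: gen_inv].
Qed.

Lemma R'_srefl a b : R' a -> R' b -> R' (srefl a *m b).
Proof. by move=> Ha; apply: R'_mul; exact: W'_srefl. Qed.

Lemma R'_V' v : R' v -> V' v.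
Proof.
move=> H; exists [:: v], (fun _ => 1); split; last by rewrite big_seq1 scale1r.
by move=> x; rewrite inE => /eqP ->.
Qed.

Lemma V'_mul w u : W' w -> V' u -> V' (w *m u).
Proof.
move=> Hw [s [f [Hs ->]]]; have [Uw _ _] := W'_preserving Hw.
exists (map (mulmx w) s), (fun z => f (invmx w *m z)); split.
  by move=> _ /mapP[y ys ->]; apply: R'_mul => //; exact: Hs.
rewrite big_map mulmx_sumr; apply: eq_bigr => y _.
by rewrite mulKmx // scalemxAr.
Qed.

Lemma coroot_for_R' a : R' a -> coroot_for R' a (coroot a).
Proof.
move=> Ha; have Ra := R'_root Ha; split; first exact: pair_coroot_self.
move=> b Hb; split; first exact: R'_srefl.
exact: coroot_int (R'_root Hb).
Qed.

Lemma coroot_for_R'_pairE a c : R' a -> coroot_for R' a c ->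
  forall u, V' u -> pair c u = pair (coroot a) u.
Proof.
move=> Ha Hc u [s [f [Hs ->]]]; rewrite !pair_sum; apply: eq_big_seq => y ys.
by rewrite (coroot_for_agree R'_root Ha (fun y => R'_srefl Ha) Hc (Hs y ys)).
Qed.

Lemma R'_root_system : root_system_in V' R'.
Proof.
split.
- exists [seq v <- roots | `[< R' v >]] => v; rewrite mem_filter.
  by split => [Hv|/andP[/asboolP //]]; rewrite asboolT //=; apply/rootsP/R'_root.
- exact: R'_V'.
- by [].
- by move/R'_root; case: RSsys.
- by move=> a Ha; exists (coroot a); exact: coroot_for_R'.
Qed.

Lemma W'_weyl w : W' w -> weyl R' w.
Proof.
apply: gen_sub => t /Ts_srefl[b Hb ->]; exists b; split; first exact: R'_beta.
by exists (coroot b); split => //; apply/coroot_for_R'/R'_beta.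
Qed.

Lemma weyl_W' h : weyl R' h -> exists w, W' w /\ forall u, V' u -> w *m u = h *m u.
Proof.
elim=> [|t [a [Ha [c [Hc ->]]]]|g h' _ [w1 [W1 E1]] _ [w2 [W2 E2]]|g Hg [w [W E]]].
- by exists 1%:M; split => //; exact: gen_one.
- exists (srefl a); split; first exact: W'_srefl.
  by move=> u Hu; rewrite sreflE reflE (coroot_for_R'_pairE Ha Hc Hu).
- exists (w1 *m w2); split; first exact: gen_mul.
  by move=> u Hu; rewrite -!mulmxA E2 // E1 // -E2 //; exact: V'_mul.
- exists (invmx w); split; first exact: gen_inv.
  move=> u Hu; have [Uw _ _] := W'_preserving W.
  have Ug : g \in unitmx.
    by apply: gen_unitmx Hg => _ [a [_ [c [[ca _] ->]]]]; exact: refl_unitmx.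
  have Hv : V' (invmx w *m u) by apply: V'_mul => //; exact: gen_inv.
  by rewrite -{2}(mulKVmx Uw u) E // mulKmx.
Qed.

Variable le : vec -> vec -> Prop.
Hypothesis leT : total_ordering le.
Hypothesis TB_pos : forall p, p \in TB -> positive le p.1.

Let g0 := undup betas.

Lemma spelled_W' w : W' w -> spelled g0 w.
Proof.
elim=> [|t /Ts_srefl[b bb ->]|g h _ Hg _ Hh|g _ Hg].
- by exists [::].
- by apply: spelled_srefl; rewrite mem_undup.
- exact: spelledM.
- by apply: spelled_inv Hg => x; rewrite mem_undup => /betas_root[].
Qed.

Lemma generates_betas : generates le R' g0.
Proof.
split; first exact: undup_uniq.
  by move=> x; rewrite mem_undup => xb; split; [exact: R'_beta | case/mapP: xb => p /TB_pos pp ->].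
move=> v [w [b [Hw Hb ->]]]; exists b; first by rewrite mem_undup.
by exists w => //; exact: spelled_W'.
Qed.

Lemma Ts_undup : Ts =i map srefl g0.
Proof.
move=> t; apply/idP/idP; first by move=> /Ts_srefl[b bb ->]; rewrite map_f // mem_undup.
by move=> /mapP[b]; rewrite mem_undup => /betas_root[_ ?] ->.
Qed.

Lemma nielsen_base : exists B, nielsen_reach Ts B /\
  forall t, t \in B <-> exists a, base le R' a /\ refl_in RS a t.
Proof.
have [B [g [reach BE gen ob]]] := nielsen_obtuse leT R'_root R'_srefl generates_betas Ts_undup.
have baseE := obtuse_base leT R'_root R'_srefl gen ob.
have gR a : a \in g -> RS a by case: gen => _ /(_ a) Sg _ /Sg[/R'_root].
exists B; split => // t; rewrite BE; split.
  move=> /mapP[a ag ->]; exists a; split; first exact/baseE.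
  exact/(refl_inE _ (gR a ag)).
move=> [a [/baseE ag /(refl_inE _ (gR a ag)) ->]]; exact: map_f.
Qed.

End Subsystem.

End RootSystem.

Theorem theorem1p14 (R : realType) (n : nat)
  (RS : 'cV[R]_n -> Prop) (le : 'cV[R]_n -> 'cV[R]_n -> Prop)
  (TB : seq ('cV[R]_n * 'M[R]_n)) :
  root_system_in (fun _ => True) RS ->
  reduced RS ->
  total_ordering le ->
  (forall p, p \in TB -> [/\ RS p.1, positive le p.1 & refl_in RS p.1 p.2]) ->
  let W' := gen (fun t => t \in [seq p.2 | p <- TB]) in
  let R' := fun v => exists w b, [/\ W' w, b \in [seq p.1 | p <- TB] &
                                    v = w *m b] in
  let V' := lspan R' in
  [/\ root_system_in V' R',
      (forall w, W' w -> exists h, weyl R' h /\ forall u, V' u -> w *m u = h *m u),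
      (forall h, weyl R' h -> exists w, W' w /\ forall u, V' u -> w *m u = h *m u)
    & exists B, nielsen_reach [seq p.2 | p <- TB] B /\
        forall t, t \in B <-> exists a, base le R' a /\ refl_in RS a t].
Proof.
move=> RSsys RSred leT HTB W' R' V'.
have TB_refl p : p \in TB -> RS p.1 /\ refl_in RS p.1 p.2 by case/HTB.
have TB_pos p : p \in TB -> positive le p.1 by case/HTB.
split.
- exact: (R'_root_system RSsys TB_refl).
- by move=> w Hw; exists w; split => //; exact: (W'_weyl RSsys TB_refl Hw).
- exact: (weyl_W' RSsys TB_refl).
- exact: (nielsen_base RSsys RSred TB_refl leT TB_pos).
Qed.
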